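(* In the Setting, it cannot hold simultaneously that $r=\sqrt{K-\lambda_1}$, $r+s=\sqrt{K^2-\lambda_2V}$, $s=-\sqrt{K^2-\lambda_2V}$, $f_2=0$, $f_1=f-c+1$, $g_1=c-1$ and $g_2=g-c$.
   Context: Setting: $\Gamma$ is a primitive strongly regular graph with parameters $(v,k,\lambda,\mu)$ (a $k$-regular graph on $v$ vertices, any two adjacent vertices having $\lambda$ and any two distinct non-adjacent vertices having $\mu$ common neighbours; primitive means $\Gamma$ and its complement are connected), with spectrum $k^1, r^f, s^g$ where $k>r>s$ and exponents are multiplicities. $C$ is a coclique in $\Gamma$ of size $c=\frac{vs}{s-k}$. A $K$-regular graph on $V$ vertices, neither complete nor edgeless, is a divisible design graph with parameters $(V,K,\lambda_1,\lambda_2;m,n)$ if its vertex set can be partitioned into $m$ canonical classes of size $n$ such that two distinct vertices in the same class have exactly $\lambda_1$ common neighbours and two vertices in different classes have exactly $\lambda_2$ common neighbours; it is proper unless $m=1$, $n=1$ or $\lambda_1=\lambda_2$. It is assumed that the subgraph $\Delta$ induced on $V(\Gamma)\setminus C$ is a proper divisible design graph with parameters $(V,K,\lambda_1,\lambda_2;m,n)$. Let $A$ be the adjacency matrix of $\Delta$, $W$ the space of vectors constant on each canonical class and $\mathbf{1}$ the all-ones vector. It is known that $A$ acts on $W^\perp$ with eigenvalues $\pm\sqrt{K-\lambda_1}$, whose multiplicities are denoted $f_1$ (for $+$) and $f_2$ (for $-$), with $f_1+f_2=m(n-1)$, and on $W\cap\mathbf{1}^\perp$ with eigenvalues $\pm\sqrt{K^2-\lambda_2V}$,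 with multiplicities $g_1$ (for $+$) and $g_2$ (for $-$), $g_1+g_2=m-1$. It is also known that the spectrum of $\Delta$ is $(k+s)^1, r^{f-c+1}, (r+s)^{c-1}, s^{g-c}$, with $c<g$. *)

From HB Require Import structures.
From mathcomp Require Import all_boot all_order all_algebra.
Set Implicit Arguments. Unset Strict Implicit. Unset Printing Implicit Defensive.
Import Order.TTheory GRing.Theory Num.Theory.
Local Open Scope ring_scope.

Definition is_graph (T : finType) (e : rel T) : Prop :=
  (forall x, ~~ e x x) /\ (forall x y, e x y = e y x).

Definition nbrs_in (T : finType) (e : rel T) (S : {set T}) (x : T) : {set T} :=
  [set z in S | e x z].

Definition common_in (T : finType) (e : rel T) (S : {set T}) (x y : T) : nat :=
  #|[set z in S | e x z && e y z]|.

Definition srg (T : finType) (e : rel T) (v k lam mu : nat) : Prop :=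
  [/\ #|T| = v,
      (forall x, #|nbrs_in e setT x| = k),
      (forall x y, x != y -> e x y -> common_in e setT x y = lam) &
      (forall x y, x != y -> ~~ e x y -> common_in e setT x y = mu)]%N.

Definition complement_rel (T : finType) (e : rel T) : rel T :=
  [rel x y | (x != y) && ~~ e x y].

Definition primitive (T : finType) (e : rel T) : Prop :=
  (forall x y, connect e x y) /\ (forall x y, connect (complement_rel e) x y).

Definition coclique (T : finType) (e : rel T) (C : {set T}) : Prop :=
  forall x y, x \in C -> y \in C -> ~~ e x y.

Definition ddg (T : finType) (e : rel T) (S : {set T})
    (V K l1 l2 m n : nat) (P : {set {set T}}) : Prop :=
  [/\ [/\ #|S| = V,
      (forall x, x \in S -> #|nbrs_in e S x| = K),
      (exists x y, [/\ x \in S, y \in S, x != y & ~~ e x y]) &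
      (exists x y, [/\ x \in S, y \in S & e x y]) ],
      [/\ partition P S, #|P| = m & forall B, B \in P -> #|B| = n],
      (forall x y, x \in S -> y \in S -> x != y -> pblock P x = pblock P y ->
         common_in e S x y = l1) &
      (forall x y, x \in S -> y \in S -> pblock P x != pblock P y ->
         common_in e S x y = l2)]%N.

Definition proper_ddg (T : finType) (e : rel T) (S : {set T})
    (V K l1 l2 m n : nat) (P : {set {set T}}) : Prop :=
  ddg e S V K l1 l2 m n P /\ [/\ m <> 1, n <> 1 & l1 <> l2]%N.

Definition adjmx (R : nzRingType) (T : finType) (e : rel T) (S : {set T}) :
    'M[R]_#|S| :=
  \matrix_(i, j) (e (enum_val i) (enum_val j))%:R.

(* Geometric multiplicity of theta as an eigenvalue of A (0 if not an eigenvalue).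
   For symmetric real matrices this is the multiplicity in the spectrum. *)
Definition eigmult (R : fieldType) (N : nat) (A : 'M[R]_N) (theta : R) : nat :=
  \rank (eigenspace A theta).

(* Matrix whose row space is W: row for vertex i is the indicator of its class. *)
Definition Wmx (R : nzRingType) (T : finType) (S : {set T}) (P : {set {set T}}) :
    'M[R]_#|S| :=
  \matrix_(i, j) ((enum_val j : T) \in pblock P (enum_val i))%:R.

Definition Wperp (R : fieldType) (T : finType) (S : {set T}) (P : {set {set T}}) :=
  kermx (Wmx R S P)^T.

Definition onesperp (R : fieldType) (N : nat) :=
  kermx (const_mx 1 : 'M[R]_(N, 1)).

Definition multWperp (R : fieldType) (T : finType) (S : {set T})
    (P : {set {set T}}) (A : 'M[R]_#|S|) (theta : R) : nat :=
  \rank (eigenspace A theta :&: Wperp R S P)%MS.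

Definition multW1perp (R : fieldType) (T : finType) (S : {set T})
    (P : {set {set T}}) (A : 'M[R]_#|S|) (theta : R) : nat :=
  \rank (eigenspace A theta :&: (Wmx R S P :&: onesperp R #|S|))%MS.

From HB Require Import structures.
From mathcomp Require Import all_boot all_order all_algebra.
Import Order.TTheory GRing.Theory Num.Theory.
Local Open Scope ring_scope.

(* Let Delta be the induced subgraph on S = V(Gamma) \ C, with
   adjacency matrix A and canonical partition P into m classes of size n, so
   |S| = mn.  The space W^perp has dimension |S| - rank W <= mn - m = m(n-1),
   because the indicator rows of m class representatives are independent.
   If f_2 = 0 then the eigenvalue sqrt(K - l1) = r already has multiplicity
   m(n-1) on W^perp, so W^perp lies entirely inside the r-eigenspace of A.
   But for two distinct vertices u, w of one class, e_u - e_w is in W^perp,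
   and the u-coordinate of (e_u - e_w) A is -[u ~ w] <= 0 (Delta is loopless),
   which forces r <= 0.  On the other hand r = sqrt(K - l1) >= 0 and
   r + s = sqrt(K^2 - l2 V) >= 0 with s < r give r > 0: a contradiction. *)

Lemma submx_of_rank_cap (F : fieldType) (N m1 m2 : nat)
    (U : 'M[F]_(m1, N)) (W : 'M[F]_(m2, N)) :
  (\rank W <= \rank (U :&: W))%N -> (W <= U)%MS.
Proof.
rewrite (geq_leqif (mxrank_leqif_sup (capmxSr U W))) => /submx_trans.
by apply; exact: capmxSl.
Qed.

Section PartitionSpaces.
Variables (F : fieldType) (T : finType) (S : {set T}) (P : {set {set T}}).
Hypothesis partP : partition P S.

Let coverP : cover P = S. Proof. by case/and3P: partP => /eqP. Qed.
Let trivP : trivIset P. Proof. by case/and3P: partP. Qed.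
Let nonemptyP : set0 \notin P. Proof. by case/and3P: partP. Qed.

Lemma partition_block_elem {B : {set T}} :
  B \in P -> exists2 x, x \in B & x \in S.
Proof.
move=> BP; have [B0 | [x xB]] := set_0Vmem B.
  by move: nonemptyP; rewrite -B0 BP.
by exists x => //; rewrite -coverP; apply/bigcupP; exists B.
Qed.

Lemma mem_pblock_sym {x y : T} : x \in S -> y \in S ->
  (x \in pblock P y) = (y \in pblock P x).
Proof.
rewrite -coverP => xc yc.
by rewrite -(eq_pblock _ trivP yc) -(eq_pblock _ trivP xc) eq_sym.
Qed.

(* The class indicators of the m classes are linearly independent rows of W,
   hence rank W >= m. *)
Lemma rank_Wmx_ge : (#|P| <= \rank (Wmx F S P))%N.
Proof.
have [S0 | [x0 x0S]] := set_0Vmem S.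
  suff -> : P = set0 by rewrite cards0.
  apply/setP => B; rewrite in_set0; apply/negbTE/negP => /partition_block_elem.
  by case=> x _; rewrite S0 in_set0.
pose b (j : 'I_#|P|) : {set T} := enum_val j.
have bP j : b j \in P by exact: enum_valP.
pose rep j := odflt x0 [pick y in b j].
have rep_in j : rep j \in b j.
  have [y yb _] := partition_block_elem (bP j).
  by rewrite /rep; case: pickP => [// | /(_ y)]; rewrite yb.
pose idx j : 'I_#|S| := enum_rank_in x0S (rep j).
have idxK j : enum_val (idx j) = rep j.
  by rewrite enum_rankK_in // -coverP; apply/bigcupP; exists (b j).
pose sel : 'M[F]_(#|S|, #|P|) := \matrix_(i, j) (i == idx j)%:R.
have selK : rowsub idx (Wmx F S P) *m sel = 1%:M.
  apply/matrixP => j j'; rewrite !mxE (bigD1 (idx j')) //= big1 => [|i ni].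
    rewrite !mxE eqxx mulr1 addr0 !idxK (def_pblock trivP (bP j) (rep_in j)).
    have [<- | njj] := eqVneq j j'; first by rewrite rep_in.
    have [rep_j_in_bj | //] := boolP (rep j' \in b j); case/eqP: njj.
    apply/enum_val_inj; rewrite -/(b j) -/(b j').
    by rewrite -(def_pblock trivP (bP j') (rep_in j')) (def_pblock trivP (bP j) rep_j_in_bj).
  by rewrite !mxE (negbTE ni) mulr0.
apply: leq_trans (mxrankS (rowsub_sub idx (Wmx F S P))).
by have := mxrankM_maxl (rowsub idx (Wmx F S P)) sel; rewrite selK mxrank1.
Qed.

Lemma rank_Wperp_le : (\rank (Wperp F S P) <= #|S| - #|P|)%N.
Proof. by rewrite /Wperp mxrank_ker mxrank_tr leq_sub2l // rank_Wmx_ge. Qed.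

Lemma class_difference_Wperp (u w : T) (uS : u \in S) (wS : w \in S) :
  pblock P u = pblock P w ->
  ((delta_mx 0 (enum_rank_in uS u) - delta_mx 0 (enum_rank_in uS w)
      : 'rV[F]_#|S|) <= Wperp F S P)%MS.
Proof.
move=> same; apply/sub_kermxP; rewrite mulmxBl -!rowE; apply/rowP => j.
have jS : enum_val j \in S by exact: enum_valP.
rewrite !mxE !enum_rankK_in //.
by rewrite (mem_pblock_sym uS jS) (mem_pblock_sym wS jS) same subrr.
Qed.

End PartitionSpaces.
Arguments class_difference_Wperp {F T S P} partP {u w}.

Lemma Wperp_eigenvalue {F : fieldType} {T : finType} {e : rel T}
    {S : {set T}} {P : {set {set T}}} {theta : F} {u w : T} :
  partition P S -> (forall x, ~~ e x x) ->
  u \in S -> w \in S -> u != w -> pblock P u = pblock P w ->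
  (Wperp F S P <= eigenspace (adjmx F e S) theta)%MS ->
  theta = - (e w u)%:R.
Proof.
move=> partP loopless uS wS uw same sub.
set iu := enum_rank_in uS u; set iw := enum_rank_in uS w.
have iuK : enum_val iu = u by rewrite enum_rankK_in.
have iwK : enum_val iw = w by rewrite enum_rankK_in.
have iuw : iu != iw by apply: contraNneq uw => E; rewrite -iuK E iwK.
have /eigenspaceP eig := submx_trans (class_difference_Wperp partP uS wS same) sub.
have := congr1 (fun M : 'rV[F]_#|S| => M 0 iu) eig.
rewrite mulmxBl -!rowE !mxE iuK iwK eqxx (negbTE iuw) (negbTE (loopless u)).
by rewrite eqxx /= subr0 mulr1 sub0r => <-.
Qed.

Lemma class_has_two {T : finType} {S : {set T}} {P : {set {set T}}} {n : nat}
    {x : T} :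
  partition P S -> (forall B, B \in P -> #|B| = n) -> n <> 1%N -> x \in S ->
  exists w, [/\ w \in S, w != x & pblock P w = pblock P x].
Proof.
move=> partP sizeP n1 xS; have /and3P[/eqP coverP trivP _] := partP.
have xc : x \in cover P by rewrite coverP.
set B := pblock P x; have BP : B \in P by exact: pblock_mem.
have xB : x \in B by rewrite mem_pblock.
have : (0 < #|B :\ x|)%N.
  have := sizeP _ BP; rewrite (cardsD1 x B) xB lt0n => szB.
  by apply/eqP => B1; apply: n1; rewrite -szB B1.
case/card_gt0P => w; rewrite !inE => /andP[wx wB].
have wS : w \in S by rewrite -coverP; apply/bigcupP; exists B.
by exists w; split=> //; exact: def_pblock.
Qed.

Lemma sqrt_pair_pos {R : rcfType} {r s a b : R} :
  r = Num.sqrt a -> r + s = Num.sqrt b -> s < r -> 0 < r.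
Proof.
move=> ra rsb sr; have r_ge0 : 0 <= r by rewrite ra sqrtr_ge0.
have rs_ge0 : 0 <= r + s by rewrite rsb sqrtr_ge0.
rewrite lt0r r_ge0 andbT; apply/eqP => r0; move: rs_ge0 sr.
by rewrite r0 add0r => /le_gtF ->.
Qed.

Theorem mainTheorem3 (R : rcfType) (T : finType) (e : rel T)
    (v k lam mu f g : nat) (r s : R) (C : {set T}) (c : nat)
    (V K l1 l2 m n : nat) (P : {set {set T}}) :
  (* Gamma: primitive SRG(v,k,lam,mu) with spectrum k^1, r^f, s^g, k > r > s *)
  is_graph e -> srg e v k lam mu -> primitive e ->
  eigmult (adjmx R e setT) k%:R = 1%N ->
  eigmult (adjmx R e setT) r = f ->
  eigmult (adjmx R e setT) s = g ->
  (1 + f + g = v)%N ->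
  r < k%:R -> s < r ->
  (* C: coclique of size c = v s / (s - k) *)
  coclique e C -> #|C| = c ->
  c%:R = v%:R * s / (s - k%:R) ->
  (* Delta = Gamma \ C is a proper DDG(V,K,l1,l2;m,n) with classes P *)
  proper_ddg e (~: C) V K l1 l2 m n P ->
  (* known facts from the setting *)
  (multWperp P (adjmx R e (~: C)) (Num.sqrt (K%:R - l1%:R))
   + multWperp P (adjmx R e (~: C)) (- Num.sqrt (K%:R - l1%:R)) = m * (n - 1))%N ->
  (multW1perp P (adjmx R e (~: C)) (Num.sqrt (K%:R ^+ 2 - l2%:R * V%:R))
   + multW1perp P (adjmx R e (~: C)) (- Num.sqrt (K%:R ^+ 2 - l2%:R * V%:R))
     = m - 1)%N ->
  eigmult (adjmx R e (~: C)) (k%:R + s) = 1%N ->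
  (eigmult (adjmx R e (~: C)) r)%:Z = f%:Z - c%:Z + 1 ->
  (eigmult (adjmx R e (~: C)) (r + s))%:Z = c%:Z - 1 ->
  (eigmult (adjmx R e (~: C)) s)%:Z = g%:Z - c%:Z ->
  (c < g)%N ->
  (* conclusion *)
  ~ [/\ [/\ r = Num.sqrt (K%:R - l1%:R),
        r + s = Num.sqrt (K%:R ^+ 2 - l2%:R * V%:R) &
        s = - Num.sqrt (K%:R ^+ 2 - l2%:R * V%:R)],
        multWperp P (adjmx R e (~: C)) (- Num.sqrt (K%:R - l1%:R)) = 0%N,
        (multWperp P (adjmx R e (~: C)) (Num.sqrt (K%:R - l1%:R)))%:Z
          = f%:Z - c%:Z + 1,
        (multW1perp P (adjmx R e (~: C)) (Num.sqrt (K%:R ^+ 2 - l2%:R * V%:R)))%:Z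
          = c%:Z - 1 &
        (multW1perp P (adjmx R e (~: C)) (- Num.sqrt (K%:R ^+ 2 - l2%:R * V%:R)))%:Z
          = g%:Z - c%:Z].
Proof.
move=> [loopless _] _ _ _ _ _ _ _ sr _ _ _ [ddgP [_ n1 _]] multWp _ _ _ _ _ _.
case=> [[r_def rs_def _] mult_neg _ _ _].
have [[_ _ [x [_ [xS _ _ _]]] _] [partP cardP sizeP] _ _] := ddgP.
rewrite mult_neg addn0 -r_def in multWp.
have cardS : #|~: C| = (m * n)%N.
  by rewrite (card_partition partP) (eq_bigr (fun _ => n)) // sum_nat_const cardP.
have Wperp_eig : (Wperp R (~: C) P <= eigenspace (adjmx R e (~: C)) r)%MS.
  apply: submx_of_rank_cap; rewrite [X in (_ <= X)%N]multWp mulnBr muln1.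
  by rewrite -cardS -cardP rank_Wperp_le.
have [w [wS wx same]] := class_has_two partP sizeP n1 xS.
have r_nonpos : r <= 0.
  by rewrite (Wperp_eigenvalue partP loopless wS xS wx same Wperp_eig) oppr_le0.
by move: (sqrt_pair_pos r_def rs_def sr); rewrite ltNge r_nonpos.
Qed.
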